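(* Let $\overline{C}(\alpha)$, $0\le\alpha\le 2$, be as defined in the context. Then: (1) For real $0\le\alpha\le2$, $\overline{C}(\alpha)=\overline{C}(2-\alpha)>0$. (2) For real $0\le\alpha_1<\alpha_2\le2$ and $0<\theta<1$, $\overline{C}(\theta\alpha_1+(1-\theta)\alpha_2)\le\overline{C}(\alpha_1)^{\theta}\,\overline{C}(\alpha_2)^{1-\theta}$. (3) For real $0\le\alpha_1<\alpha_2\le1$, $\overline{C}(\alpha_1)\ge\overline{C}(\alpha_2)$; consequently the minimum of $\overline{C}(\alpha)$ over $0\le\alpha\le2$ is attained at $\alpha=1$. (4) For real $0\le\alpha<\tfrac12$, $\overline{C}(\alpha)=\infty$.
   Context: For a strictly increasing sequence $(\lambda_k)_{k=-\infty}^{\infty}$ of real numbers, put $\delta_k:=\min\{\lambda_k-\lambda_{k-1},\lambda_{k+1}-\lambda_k\}$. For $0\le\alpha\le2$, let $\overline{C}(\alpha)$ be the minimum of all constants $C(\alpha)$ such that $$\sum_{m=1}^N\sum_{\substack{n=1\\ n\ne m}}^N\frac{\delta_m^{2-\alpha}\delta_n^{\alpha}t_mt_n}{(\lambda_m-\lambda_n)^2}\le C(\alpha)\sum_{n=1}^N t_n^2$$ holds for every positive integer $N$, every strictly increasing real sequence $(\lambda_k)_{k\in\mathbb Z}$ and all nonnegative reals $t_1,\dots,t_N$; set $\overline{C}(\alpha)=\infty$ if no such real constant exists (with the usual conventions for $\infty$ in the inequalities). *)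

From HB Require Import structures.
From mathcomp Require Import all_boot all_order all_algebra.
From mathcomp Require Import all_classical all_reals all_analysis.
Set Implicit Arguments. Unset Strict Implicit. Unset Printing Implicit Defensive.
Import Order.TTheory GRing.Theory Num.Theory.
Local Open Scope classical_set_scope.
Local Open Scope ring_scope.

Definition strictly_increasing (R : realType) (lam : int -> R) : Prop :=
  forall i j : int, (i < j)%R -> lam i < lam j.

Definition delta (R : realType) (lam : int -> R) (k : int) : R :=
  Num.min (lam k - lam (k - 1)) (lam (k + 1) - lam k).

Definition lhs (R : realType) (a : R) (N : nat) (lam : int -> R) (t : nat -> R) : R :=
  \sum_(1 <= m < N.+1) \sum_(1 <= n < N.+1 | n != m)
     (delta lam m%:Z `^ (2 - a) * delta lam n%:Z `^ a * t m * t n)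
       / (lam m%:Z - lam n%:Z) ^+ 2.

Definition admissible (R : realType) (a C : R) : Prop :=
  forall (N : nat) (lam : int -> R) (t : nat -> R),
    strictly_increasing lam ->
    (forall n, (1 <= n <= N)%N -> 0 <= t n) ->
    lhs a N lam t <= C * \sum_(1 <= n < N.+1) t n ^+ 2.

(* Cbar(alpha): the least admissible constant, +oo if none exists.
   (The set of admissible constants is an up-closed closed ray, so its
   infimum is a minimum when it is nonempty; ereal_inf of the empty set is +oo.) *)
Definition Cbar (R : realType) (a : R) : \bar R :=
  ereal_inf [set C%:E | C in admissible a].

From HB Require Import structures.
From mathcomp Require Import all_boot all_order all_algebra.
From mathcomp Require Import all_classical all_reals all_analysis.
From mathcomp Require Import ring lra zify.
Import Order.TTheory GRing.Theory Num.Theory.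
Local Open Scope classical_set_scope.
Local Open Scope ring_scope.

(* The left-hand side is a sum of terms delta_m^(2-a) delta_n^a w_mn with
   w_mn >= 0 symmetric in m and n. Exchanging m and n gives the symmetry
   a <-> 2 - a, and Hölder's inequality on the double sum makes
   a |-> lhs log-convex; both properties pass to the least admissible
   constant. Monotonicity on [0, 1] follows because a2 is a convex combination
   of a1 and 2 - a1, where Cbar takes the same value. Equally spaced lambda and
   t = 1 show Cbar >= 1. For a < 1/2, take unit gaps up to lambda_2 = 1, then
   j^2 gaps of size j^-2, and t = 1 at n = 1 and 1/j elsewhere: the row m = 1
   alone is at least j^(1-2a)/4 while sum t_n^2 = 2. *)

Section Hoelder.
Context {R : realType}.

Lemma powR_mul_powR_subr (x th : R) : 0 <= x -> x `^ th * x `^ (1 - th) = x.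
Proof.
move=> x0; rewrite -powRD; last by rewrite subrKC oner_eq0.
by rewrite subrKC powRr1.
Qed.

Lemma weighted_AMGM (x y th : R) : 0 <= x -> 0 <= y -> 0 < th < 1 ->
  x `^ th * y `^ (1 - th) <= th * x + (1 - th) * y.
Proof.
move=> x0 y0 /andP[th0 th1].
have th1_gt0 : 0 < 1 - th by rewrite subr_gt0.
have := @conjugate_powR R (x `^ th) (y `^ (1 - th)) th^-1 (1 - th)^-1
  (powR_ge0 _ _) (powR_ge0 _ _).
rewrite !invr_gt0 th0 th1_gt0 !invrK subrKC => /(_ isT isT erefl).
rewrite -!powRrM !mulfV ?gt_eqF // !powRr1 //.
by rewrite (mulrC th) (mulrC (1 - th)).
Qed.

Lemma hoelder_sum {I : eqType} (r : seq I) (P : pred I) (u v : I -> R) th :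
  0 < th < 1 -> (forall i, P i -> 0 <= u i) -> (forall i, P i -> 0 <= v i) ->
  \sum_(i <- r | P i) u i `^ th * v i `^ (1 - th) <=
  (\sum_(i <- r | P i) u i) `^ th * (\sum_(i <- r | P i) v i) `^ (1 - th).
Proof.
move=> th01 u0 v0; have /andP[th0 th1] := th01.
set U := \sum_(i <- r | P i) u i; set V := \sum_(i <- r | P i) v i.
have vanish (w : I -> R) : (forall i, P i -> 0 <= w i) ->
    \sum_(i <- r | P i) w i = 0 -> forall i, i \in r -> P i -> w i = 0.
  move=> w0 /eqP; rewrite psumr_eq0 // => /allP wr i ir Pi.
  by apply/eqP; move: (wr i ir); rewrite Pi.
have [U0|Un0] := eqVneq U 0.
  rewrite big1_seq ?mulr_ge0 ?powR_ge0 // => i /andP[Pi ir].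
  by rewrite (vanish u u0 U0 i ir Pi) powR0 ?gt_eqF // mul0r.
have [V0|Vn0] := eqVneq V 0.
  rewrite big1_seq ?mulr_ge0 ?powR_ge0 // => i /andP[Pi ir].
  by rewrite (vanish v v0 V0 i ir Pi) powR0 ?gt_eqF ?subr_gt0 // mulr0.
have Ugt0 : 0 < U by rewrite lt_neqAle eq_sym Un0 sumr_ge0.
have Vgt0 : 0 < V by rewrite lt_neqAle eq_sym Vn0 sumr_ge0.
(* Normalise both sums to 1 and apply AM-GM termwise. *)
set K := U `^ th * V `^ (1 - th).
have normalise (w : I -> R) W s i : 0 < W -> P i -> (forall i, P i -> 0 <= w i) ->
    w i `^ s = W `^ s * (w i / W) `^ s.
  move=> W0 Pi w0; rewrite -powRM ?divr_ge0 ?w0 ?ltW //.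
  by rewrite mulrCA mulfV ?gt_eqF // mulr1.
apply: (@le_trans _ _ (\sum_(i <- r | P i) K * (th * (u i / U) + (1 - th) * (v i / V)))).
  apply: ler_sum => i Pi.
  rewrite (normalise u U) // (normalise v V) // mulrACA.
  by rewrite ler_wpM2l ?mulr_ge0 ?powR_ge0 // weighted_AMGM ?divr_ge0 ?u0 ?v0 ?ltW.
rewrite -big_distrr /= big_split /= -!big_distrr /= -!mulr_suml -/U -/V.
by rewrite !mulfV ?gt_eqF // !mulr1 subrKC mulr1.
Qed.

End Hoelder.

Section LhsSum.
Context {R : realType}.
Variables (N : nat) (lam : int -> R) (t : nat -> R).
Hypothesis lam_incr : strictly_increasing lam.
Hypothesis t_ge0 : forall n, (1 <= n <= N)%N -> 0 <= t n.

Definition lhs_term (a : R) (m n : nat) : R :=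
  delta lam m%:Z `^ (2 - a) * delta lam n%:Z `^ a * t m * t n
    / (lam m%:Z - lam n%:Z) ^+ 2.

Lemma lhsE (a : R) : lhs a N lam t =
  \sum_(1 <= m < N.+1) \sum_(1 <= n < N.+1 | n != m) lhs_term a m n.
Proof. by []. Qed.

Lemma delta_gt0 (k : int) : 0 < delta lam k.
Proof. by rewrite /delta lt_min !subr_gt0 !lam_incr //; lia. Qed.

Let t_ge0_iota n : n \in index_iota 1 N.+1 -> 0 <= t n.
Proof. by rewrite mem_index_iota => hn; apply: t_ge0; lia. Qed.

Lemma lhs_term_ge0 (a : R) (m n : nat) :
  m \in index_iota 1 N.+1 -> n \in index_iota 1 N.+1 -> 0 <= lhs_term a m n.
Proof.
by move=> /t_ge0_iota tm /t_ge0_iota tn; rewrite divr_ge0 ?sqr_ge0 ?mulr_ge0 ?powR_ge0.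
Qed.

Lemma lhs_ge0 (a : R) : 0 <= lhs a N lam t.
Proof.
rewrite lhsE big_seq sumr_ge0 // => m hm.
by rewrite big_seq_cond sumr_ge0 // => n /andP[hn _]; apply: lhs_term_ge0.
Qed.

Lemma lhs_ge_row (a : R) (m : nat) : (1 <= m <= N)%N ->
  \sum_(1 <= n < N.+1 | n != m) lhs_term a m n <= lhs a N lam t.
Proof.
move=> hm; rewrite lhsE (bigD1_seq m) ?iota_uniq //=; last by rewrite mem_index_iota; lia.
rewrite lerDl big_seq_cond sumr_ge0 // => k /andP[hk _].
by rewrite big_seq_cond sumr_ge0 // => n /andP[hn _]; apply: lhs_term_ge0.
Qed.

Lemma lhs_term_convex_comb (a1 a2 th : R) (m n : nat) :
  m \in index_iota 1 N.+1 -> n \in index_iota 1 N.+1 ->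
  lhs_term (th * a1 + (1 - th) * a2) m n =
  lhs_term a1 m n `^ th * lhs_term a2 m n `^ (1 - th).
Proof.
move=> /t_ge0_iota tm /t_ge0_iota tn.
have dm := delta_gt0 m%:Z; have dn := delta_gt0 n%:Z.
set w := t m * t n / (lam m%:Z - lam n%:Z) ^+ 2.
have w0 : 0 <= w by rewrite divr_ge0 ?sqr_ge0 ?mulr_ge0.
have termE a : lhs_term a m n = delta lam m%:Z `^ (2 - a) * delta lam n%:Z `^ a * w.
  by rewrite /lhs_term /w !mulrA.
rewrite !termE; clearbody w.
rewrite !powRM ?mulr_ge0 ?powR_ge0 // -!powRrM.
have -> : 2 - (th * a1 + (1 - th) * a2) = (2 - a1) * th + (2 - a2) * (1 - th) by ring.
have -> : th * a1 + (1 - th) * a2 = a1 * th + a2 * (1 - th) by ring.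
rewrite (powRD (x := delta lam m%:Z)) ?(gt_eqF dm) ?implybT //.
rewrite (powRD (x := delta lam n%:Z)) ?(gt_eqF dn) ?implybT //.
rewrite -{1}(powR_mul_powR_subr w th w0); ring.
Qed.

Lemma lhs_log_convex (a1 a2 th : R) : 0 < th < 1 ->
  lhs (th * a1 + (1 - th) * a2) N lam t <=
  lhs a1 N lam t `^ th * lhs a2 N lam t `^ (1 - th).
Proof.
move=> th01; set r := index_iota 1 N.+1.
pose row a m := \sum_(n <- r | (n \in r) && (n != m)) lhs_term a m n.
have row_ge0 a m : m \in r -> 0 <= row a m.
  by move=> hm; apply: sumr_ge0 => n /andP[hn _]; apply: lhs_term_ge0.
have lhs_row a : lhs a N lam t = \sum_(m <- r | m \in r) row a m.
  by rewrite lhsE big_seq; apply: eq_bigr => m _; rewrite big_seq_cond.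
rewrite !lhs_row.
apply: (le_trans _ (hoelder_sum r _ (row a1) (row a2) th th01 (row_ge0 a1) (row_ge0 a2))).
apply: ler_sum => m hm.
have term_ge0 a n : (n \in r) && (n != m) -> 0 <= lhs_term a m n.
  by case/andP=> hn _; apply: lhs_term_ge0.
apply: (le_trans _ (hoelder_sum r _ _ _ th th01 (term_ge0 a1) (term_ge0 a2))).
by apply: ler_sum => n /andP[hn _]; rewrite lhs_term_convex_comb.
Qed.

Lemma lhs_subr (a : R) : lhs (2 - a) N lam t = lhs a N lam t.
Proof.
rewrite !lhsE.
have termE m n : lhs_term (2 - a) m n = lhs_term a n m.
  rewrite /lhs_term opprB addrC subrK.
  by rewrite -(sqrrN (lam m%:Z - _)) opprB; ring.
rewrite (eq_bigr _ (fun m _ => big_mkcond _ _)) exchange_big /=.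
apply: eq_bigr => n _; rewrite [RHS]big_mkcond; apply: eq_bigr => m _.
by rewrite termE eq_sym.
Qed.

End LhsSum.

Section Cbar.
Context {R : realType}.

Lemma admissible_ge1 {a C : R} : admissible a C -> 1 <= C.
Proof.
pose idseq (k : int) : R := k%:~R.
have idseq_incr : strictly_increasing idseq by move=> i j; rewrite ltr_int.
have delta_idseq k : delta idseq k = 1.
  by rewrite /delta /idseq !(intrD, intrB) opprB addrC subrK addrAC subrr add0r minxx.
move/(_ 2%N idseq (fun=> 1) idseq_incr (fun _ _ => ler01)).
rewrite lhsE /lhs_term unlock /= !delta_idseq !powR1 /idseq.
rewrite !mul1r !expr1n !addr0 -[(1%:~R : R)]/(1 : R) -[(2%:~R : R)]/(2 : R).
have -> : (1 - 2 : R) ^+ 2 = 1 by ring.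
have -> : (2 - 1 : R) ^+ 2 = 1 by ring.
rewrite invr1; lra.
Qed.

Lemma Cbar_ge1 (a : R) : (1 <= Cbar a)%E.
Proof.
by apply: le_ereal_inf_tmp => _ [C aC <-]; rewrite lee_fin; apply: admissible_ge1 aC.
Qed.

Lemma Cbar_le (a C : R) : admissible a C -> (Cbar a <= C%:E)%E.
Proof. by move=> aC; apply: ereal_inf_lbound; exists C. Qed.

Lemma admissible_Cbar {a x : R} : Cbar a = x%:E -> admissible a x.
Proof.
move=> Cx N lam t lam_incr t_ge0.
set L := lhs a N lam t; set S := \sum_(1 <= n < N.+1) t n ^+ 2.
have L_le C : admissible a C -> L <= C * S by move/(_ N lam t lam_incr t_ge0).
have : 0 <= S by rewrite sumr_ge0 // => n _; apply: sqr_ge0.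
rewrite le_eqVlt => /predU1P[S0|S_gt0].
  have : (Cbar a < +oo)%E by rewrite Cx ltry.
  by case/ereal_inf_lt => _ [C aC <-] _; have := L_le C aC; rewrite -S0 !mulr0.
have : ((L / S)%:E <= Cbar a)%E.
  by apply: le_ereal_inf_tmp => _ [C aC <-]; rewrite lee_fin ler_pdivrMr ?L_le.
by rewrite Cx lee_fin ler_pdivrMr.
Qed.

Lemma admissible_subr (a C : R) : admissible (2 - a) C <-> admissible a C.
Proof.
by split=> aC N lam t lam_incr t_ge0; [rewrite -lhs_subr | rewrite lhs_subr]; apply: aC.
Qed.

Lemma Cbar_subr (a : R) : Cbar (2 - a) = Cbar a.
Proof.
rewrite /Cbar (_ : admissible (2 - a) = admissible a) //.
by apply/funext => C; apply/propext; apply: admissible_subr.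
Qed.

Lemma poweR_mul_poweR_subr (x : \bar R) (th : R) : (0 <= x)%E ->
  (x `^ th * x `^ (1 - th))%E = x.
Proof.
by move=> x0; rewrite -poweRD ?add_neq0_poweRD_def ?subrKC ?oner_neq0 // poweRe1.
Qed.

Lemma Cbar_log_convex (a1 a2 th : R) : 0 < th < 1 ->
  (Cbar (th * a1 + (1 - th) * a2) <= Cbar a1 `^ th * Cbar a2 `^ (1 - th))%E.
Proof.
move=> th01; have /andP[th0 th1] := th01.
have Cbar_gt0 a : (0 < Cbar a)%E := lt_le_trans lte01 (Cbar_ge1 a).
case E1: (Cbar a1) (Cbar_gt0 a1) => [x1| |] // x1_gt0; last first.
  by rewrite poweRyr ?gt_eqF // gt0_mulye ?leey // poweR_gt0 ?Cbar_gt0.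
case E2: (Cbar a2) (Cbar_gt0 a2) => [x2| |] // _; last first.
  by rewrite (poweRyr (r := 1 - th)) ?gt_eqF ?subr_gt0 // gt0_muley ?leey // poweR_gt0.
have adm1 := admissible_Cbar E1; have adm2 := admissible_Cbar E2.
have x1_ge0 := le_trans ler01 (admissible_ge1 adm1).
have x2_ge0 := le_trans ler01 (admissible_ge1 adm2).
rewrite !poweR_EFin -EFinM; apply: Cbar_le => N lam t lam_incr t_ge0.
apply: le_trans (lhs_log_convex _ _ _ lam_incr t_ge0 _ _ _ th01) _.
set S := \sum_(1 <= n < N.+1) t n ^+ 2.
have S_ge0 : 0 <= S by rewrite sumr_ge0 // => n _; apply: sqr_ge0.
rewrite -(powR_mul_powR_subr S th S_ge0) mulrACA -!powRM //.
apply: ler_pM; rewrite ?powR_ge0 //; apply: ge0_ler_powR;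
  rewrite ?nnegrE ?lhs_ge0 ?mulr_ge0 ?subr_ge0 ?(ltW th0) ?(ltW th1) //.
- exact: adm1 N lam t lam_incr t_ge0.
- exact: adm2 N lam t lam_incr t_ge0.
Qed.

Lemma Cbar_le_between (a1 a2 : R) : a1 < a2 < 2 - a1 -> (Cbar a2 <= Cbar a1)%E.
Proof.
move=> /andP[lt12 lt2].
set th := (2 - a1 - a2) / (2 - 2 * a1).
have den_gt0 : 0 < 2 - 2 * a1 by lra.
have th01 : 0 < th < 1 by rewrite divr_gt0 ?ltr_pdivrMr //; lra.
have -> : a2 = th * a1 + (1 - th) * (2 - a1) by rewrite /th; field; rewrite gt_eqF.
apply: le_trans (Cbar_log_convex _ _ _ th01) _.
by rewrite Cbar_subr poweR_mul_poweR_subr // (le_trans _ (Cbar_ge1 a1)).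
Qed.

End Cbar.

Section BlowUp.
Context {R : realType}.

Lemma exists_nat_powR_gt (x p : R) : 0 < p -> exists2 j : nat, (0 < j)%N & x < j%:R `^ p.
Proof.
move=> p_gt0; set X := `|x| `^ p^-1.
have X_ge0 : 0 <= X by apply: powR_ge0.
exists (Num.bound X).+1 => //.
have X_lt : X < (Num.bound X).+1%:R.
  by apply: (lt_le_trans (archi_boundP X_ge0)); rewrite ler_nat.
apply: (le_lt_trans (ler_norm x)).
have := gt0_ltr_powR p_gt0 X_ge0 (ler0n _ _) X_lt.
by rewrite /X -powRrM mulVf ?gt_eqF // powRr1.
Qed.

Definition two_scale_seq (e : R) (k : int) : R :=
  if k <= 1 then (k - 1)%:~R else 1 + (k - 2)%:~R * e.

Lemma two_scale_seq_le1 (e : R) (k : int) : k <= 1 -> two_scale_seq e k = (k - 1)%:~R.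
Proof. by rewrite /two_scale_seq => ->. Qed.

Lemma two_scale_seq_gt1 (e : R) (k : int) : 1 < k ->
  two_scale_seq e k = 1 + (k - 2)%:~R * e.
Proof. by move=> k_gt1; rewrite /two_scale_seq leNgt k_gt1. Qed.

Lemma two_scale_seq_incr (e : R) : 0 < e -> strictly_increasing (two_scale_seq e).
Proof.
move=> e_gt0 i j ij; rewrite /two_scale_seq.
case: (leP i 1) => hi; case: (leP j 1) => hj.
- by rewrite ltr_int; lia.
- have : (i - 1)%:~R <= 0 :> R by rewrite lerz0; lia.
  have : 0 <= (j - 2)%:~R * e by rewrite mulr_ge0 ?(ltW e_gt0) // ler0z; lia.
  lra.
- lia.
- by rewrite ltrD2l ltr_pM2r // ltr_int; lia.
Qed.

Lemma delta_two_scale_seq1 (e : R) : delta (two_scale_seq e) 1 = 1.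
Proof.
rewrite /delta (@two_scale_seq_gt1 _ (1 + 1)) // !two_scale_seq_le1 //.
have -> : (1 - 1)%:~R - (1 - 1 - 1)%:~R = 1 :> R by rewrite -intrB.
have -> : 1 + (1 + 1 - 2)%:~R * e - (1 - 1)%:~R = 1 :> R by rewrite !intrB intrD; ring.
by rewrite minxx.
Qed.

Lemma delta_two_scale_seq (e : R) (k : int) : e <= 1 -> 1 < k ->
  delta (two_scale_seq e) k = e.
Proof.
move=> e_le1 k_gt1; rewrite /delta.
have -> : two_scale_seq e (k + 1) - two_scale_seq e k = e.
  by rewrite !two_scale_seq_gt1 ?intrB ?intrD; [ring | lia | lia].
apply: min_r; have [->|k_ne2] := eqVneq k 2.
  by rewrite (@two_scale_seq_gt1 _ 2) // two_scale_seq_le1 //; lra.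
rewrite !two_scale_seq_gt1; [|lia|lia].
rewrite (_ : 1 + (k - 2)%:~R * e - (1 + (k - 1 - 2)%:~R * e) = e) //.
by rewrite !intrB; ring.
Qed.

Lemma lhs_term_two_scale_ge (e a : R) (t : nat -> R) (n : nat) :
  0 < e <= 1 -> (2 <= n)%N -> (n%:R - 2) * e <= 1 -> 0 <= t 1%N -> 0 <= t n ->
  e `^ a * t 1%N * t n / 4 <= lhs_term (two_scale_seq e) t a 1 n.
Proof.
move=> /andP[e_gt0 e_le1] n2 gap_le1 t1_ge0 tn_ge0.
rewrite /lhs_term delta_two_scale_seq1 delta_two_scale_seq //.
rewrite powR1 mul1r two_scale_seq_le1 // two_scale_seq_gt1; last by lia.
rewrite !intrB subrr sub0r sqrrN -pmulrn.
have gap_ge0 : 0 <= (n%:R - 2) * e by rewrite mulr_ge0 ?subr_ge0 ?ler_nat ?(ltW e_gt0).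
rewrite ler_wpM2l ?mulr_ge0 ?powR_ge0 // lef_pV2 ?posrE ?exprn_gt0 //; [nra|lra].
Qed.

Definition spike_weight (j n : nat) : R := if n == 1%N then 1 else j%:R^-1.

Lemma spike_weight_ge0 (j n : nat) : 0 <= spike_weight j n.
Proof. by rewrite /spike_weight; case: ifP; rewrite ?invr_ge0. Qed.

Lemma sum_spike_weight_sqr (j : nat) : (0 < j)%N ->
  \sum_(1 <= n < (j * j).+2) spike_weight j n ^+ 2 = 2.
Proof.
move=> j_gt0; rewrite big_ltn // {1}/spike_weight eqxx expr1n.
rewrite (eq_big_nat _ _ (F2 := fun=> j%:R^-1 ^+ 2)); last first.
  by move=> n /andP[n2 _]; rewrite /spike_weight gtn_eqF.
rewrite sumr_const_nat !subSS subn0.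
by field; rewrite pnatr_eq0 -lt0n.
Qed.

Lemma lhs_two_scale_spike_ge (a : R) (j : nat) : (0 < j)%N ->
  j%:R `^ (1 - 2 * a) / 4 <=
  lhs a (j * j).+1 (two_scale_seq (j%:R ^+ 2)^-1) (spike_weight j).
Proof.
move=> j_gt0; set e := (j%:R ^+ 2)^-1; set N := (j * j).+1.
have j_gt0' : 0 < j%:R :> R by rewrite ltr0n.
have e_gt0 : 0 < e by rewrite invr_gt0 exprn_gt0.
have e_le1 : e <= 1 by rewrite invf_le1 ?exprn_gt0 // exprn_ege1 // ler1n.
have e01 : 0 < e <= 1 by rewrite e_gt0 e_le1.
apply: le_trans (lhs_ge_row N _ _ (fun n _ => spike_weight_ge0 j n) a 1 _); last by lia.
rewrite big_ltn_cond //= big_mkcond /=.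
have row_ge : \sum_(2 <= n < N.+1) (e `^ a * j%:R^-1 / 4) <=
    \sum_(2 <= n < N.+1) (if n != 1%N
      then lhs_term (two_scale_seq e) (spike_weight j) a 1 n else 0).
  apply: ler_sum_nat => n /andP[n2 nN]; rewrite gtn_eqF //.
  have gap_le1 : (n%:R - 2) * e <= 1.
    rewrite ler_pdivrMr ?exprn_gt0 // mul1r expr2 -natrM.
    by move: nN; rewrite /N -addn2 -(ltr_nat R) natrD; lra.
  have := lhs_term_two_scale_ge e a (spike_weight j) n e01 n2 gap_le1
    (spike_weight_ge0 j 1) (spike_weight_ge0 j n).
  by rewrite /spike_weight eqxx gtn_eqF // mulr1.
apply: le_trans row_ge; rewrite sumr_const_nat /N !subSS subn0.
have e_pow : e `^ a = j%:R `^ (- (2 * a)).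
  by rewrite /e -powR_invn ?ler0n // -powRrM mulNr.
rewrite e_pow powRD ?(gt_eqF j_gt0') ?implybT // powRr1 ?ler0n //.
rewrite -(mulr_natr _ (j * j)) natrM (_ : _ / j%:R / 4 * _ = j%:R * j%:R `^ (- (2 * a)) / 4) //.
by field; rewrite gt_eqF.
Qed.

Lemma admissible_ge_half {a C : R} : admissible a C -> 2^-1 <= a.
Proof.
move=> aC; rewrite leNgt; apply/negP => a_lt.
have p_gt0 : 0 < 1 - 2 * a by lra.
have [j j_gt0 Cj] := exists_nat_powR_gt (8 * C) _ p_gt0.
have e_gt0 : 0 < (j%:R ^+ 2)^-1 :> R by rewrite invr_gt0 exprn_gt0 // ltr0n.
have := aC (j * j).+1 _ _ (two_scale_seq_incr _ e_gt0) (fun n _ => spike_weight_ge0 j n).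
rewrite sum_spike_weight_sqr // => /(le_trans (lhs_two_scale_spike_ge a j j_gt0)).
lra.
Qed.

End BlowUp.

Theorem theorem3 (R : realType) :
  (* (1) symmetry and positivity *)
  (forall a : R, 0 <= a <= 2 ->
     Cbar a = Cbar (2 - a) /\ (0 < Cbar a)%E) /\
  (* (2) log-convexity *)
  (forall a1 a2 th : R, 0 <= a1 -> a1 < a2 -> a2 <= 2 -> 0 < th < 1 ->
     (Cbar (th * a1 + (1 - th) * a2) <=
        (Cbar a1 `^ th) * (Cbar a2 `^ (1 - th)))%E) /\
  (* (3) monotonicity on [0,1] and minimum at 1 *)
  (forall a1 a2 : R, 0 <= a1 -> a1 < a2 -> a2 <= 1 ->
     (Cbar a2 <= Cbar a1)%E) /\
  (forall a : R, 0 <= a <= 2 -> (Cbar 1 <= Cbar a)%E) /\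
  (* (4) blow-up for alpha < 1/2 *)
  (forall a : R, 0 <= a -> a < 2^-1 -> Cbar a = +oo%E).
Proof.
split; [|split; [|split; [|split]]].
- move=> a _; rewrite Cbar_subr; split=> //.
  exact: lt_le_trans lte01 (Cbar_ge1 a).
- by move=> a1 a2 th _ _ _; apply: Cbar_log_convex.
- by move=> a1 a2 _ lt12 a2_le1; apply: Cbar_le_between; rewrite lt12; lra.
- move=> a /andP[a_ge0 a_le2]; have [a_lt1|a_gt1|->] := ltgtP a 1 => //.
    by apply: Cbar_le_between; rewrite a_lt1; lra.
  by rewrite -(Cbar_subr a); apply: Cbar_le_between; apply/andP; split; lra.
- move=> a _ a_lt; apply/ereal_inf_pinfty => _ [C aC <-].
  by have := admissible_ge_half aC; rewrite leNgt a_lt.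
Qed.
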